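(* Let $L_x, L_y>0$, $L_{xy}\geq 0$, $0<\mu_x\le L_x$, $0<\mu_y\le L_y$, and let $F\in\mathcal{F}(L_x, L_y, L_{xy}, \mu_x, \mu_y)$ (defined in the context). Set $L=\max\{L_x, L_y\}$, $\mu=\min\{\mu_x, \mu_y\}>0$, and define $\alpha:\left[0, \tfrac{2\mu}{\mu L+L_{xy}^2}\right]\to\mathbb{R}$ by $$ \alpha(t)=1+\tfrac{1}{2}\left(L^2+\mu^2+2L_{xy}^2\right)t^2-(L+\mu)t +\tfrac{1}{2}(L-\mu)t\sqrt{(Lt + \mu t - 2)^2 + 4L_{xy}^2t^2} $$ (the bound factor for one step of the gradient descent-ascent method $x^{2}=x^1-t\nabla_x F(x^1, y^1)$, $y^{2}=y^1+t\nabla_y F(x^1, y^1)$, in the inequality $\|x^2-x^\star\|^2+\|y^2-y^\star\|^2\leq\alpha(t)(\|x^1-x^\star\|^2+\|y^1-y^\star\|^2)$, where $(x^\star,y^\star)$ is the saddle point of $F$). Then the minimizer of $\alpha$ over its domain (the optimal step length with respect to this bound) is $$ t^\star=\tfrac{2\left((L+\mu)\sqrt{L_{xy}^2+L\mu}+L_{xy}(\mu-L)\right)} {\left(4L_{xy}^2+(L+\mu)^2\right)\sqrt{L_{xy}^2+L\mu}}, $$ and $$ \alpha(t^\star)=\tfrac{8 L_{xy} \left(L^2-\mu^2\right) \sqrt{L \mu+L_{xy}^2}+\left(L^2-\mu^2\right)^2+16 L_{xy}^2 \left(L \mu+L_{xy}^2\right)}{\left((L+\mu)^2+4 L_{xy}^2\right)^2}.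 $$
   Context: $\mathcal{F}(L_x, L_y, L_{xy}, \mu_x, \mu_y)$ denotes the set of differentiable $F:\mathbb{R}^n\times\mathbb{R}^m\to\mathbb{R}$ such that for all $x,x_1,x_2,y,y_1,y_2$: $\|\nabla_x F(x_2, y)-\nabla_x F(x_1, y)\|\leq L_x\|x_2-x_1\|$; $\|\nabla_y F(x, y_2)-\nabla_y F(x, y_1)\|\leq L_y\|y_2-y_1\|$; $\|\nabla_x F(x, y_2)-\nabla_x F(x, y_1)\|\leq L_{xy}\|y_2-y_1\|$; $\|\nabla_y F(x_2, y)-\nabla_y F(x_1, y)\|\leq L_{xy}\|x_2-x_1\|$; $F(\cdot, y)-\tfrac{\mu_x}{2}\|\cdot\|^2$ convex for every $y$ and $F(x,\cdot)+\tfrac{\mu_y}{2}\|\cdot\|^2$ concave for every $x$. *)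

From HB Require Import structures.
From mathcomp Require Import all_boot all_order all_algebra.
From mathcomp Require Import all_classical all_reals all_analysis.
Set Implicit Arguments. Unset Strict Implicit. Unset Printing Implicit Defensive.
Import Order.TTheory GRing.Theory Num.Theory.
Import numFieldNormedType.Exports.
Local Open Scope ring_scope.

Definition enorm {R : realType} {n : nat} (v : 'rV[R]_n) : R :=
  Num.sqrt (\sum_(i < n) v 0 i ^+ 2).

Definition convexf {R : realType} {n : nat} (f : 'rV[R]_n -> R) : Prop :=
  forall (a b : 'rV[R]_n) (t : R), 0 <= t <= 1 ->
    f (t *: a + (1 - t) *: b) <= t * f a + (1 - t) * f b.

Definition gradx {R : realType} {n m : nat} (F : 'rV[R]_n * 'rV[R]_m -> R)
  (x : 'rV[R]_n) (y : 'rV[R]_m) : 'rV[R]_n :=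
  \row_(i < n) derive F (x, y) (delta_mx 0 i, 0).

Definition grady {R : realType} {n m : nat} (F : 'rV[R]_n * 'rV[R]_m -> R)
  (x : 'rV[R]_n) (y : 'rV[R]_m) : 'rV[R]_m :=
  \row_(j < m) derive F (x, y) (0, delta_mx 0 j).

Definition FClass {R : realType} {n m : nat} (Lx Ly Lxy mux muy : R)
  (F : 'rV[R]_n * 'rV[R]_m -> R) : Prop :=
  (forall p, differentiable F p) /\
      (forall x1 x2 y, enorm (gradx F x2 y - gradx F x1 y) <= Lx * enorm (x2 - x1)) /\
      (forall x y1 y2, enorm (grady F x y2 - grady F x y1) <= Ly * enorm (y2 - y1)) /\
      (forall x y1 y2, enorm (gradx F x y2 - gradx F x y1) <= Lxy * enorm (y2 - y1)) /\
      (forall x1 x2 y, enorm (grady F x2 y - grady F x1 y) <= Lxy * enorm (x2 - x1)) /\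
      (forall y, convexf (fun x => F (x, y) - mux / 2 * enorm x ^+ 2)) /\
      (forall x, convexf (fun y => - (F (x, y) + muy / 2 * enorm y ^+ 2))).

Definition alpha {R : realType} (L mu Lxy t : R) : R :=
  1 + 2^-1 * (L ^+ 2 + mu ^+ 2 + 2 * Lxy ^+ 2) * t ^+ 2 - (L + mu) * t
  + 2^-1 * (L - mu) * t * Num.sqrt ((L * t + mu * t - 2) ^+ 2 + 4 * Lxy ^+ 2 * t ^+ 2).

From HB Require Import structures.
From mathcomp Require Import all_boot all_order all_algebra.
From mathcomp Require Import all_classical all_reals all_analysis.
From mathcomp Require Import lra ring.
Import Order.TTheory GRing.Theory Num.Theory.
Import numFieldNormedType.Exports.
Local Open Scope ring_scope.

(* The square root in [alpha] is the norm of [((L + mu) t - 2, 2 Lxy t)], so by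
   Cauchy-Schwarz it dominates the scalar product of that vector with any unit
   vector [(C, S)]; since [L >= mu] this bounds [alpha] from below by a quadratic
   polynomial in [t].  Taking [(C, S)] parallel to the vector at [t = tstar]
   makes the bound tight at [tstar], and thanks to the identity
   [(L + mu)^2 + 4 Lxy^2 = (L - mu)^2 + 4 r^2], where [r^2 = Lxy^2 + L mu],
   the quadratic is exactly [alpha tstar + r^2 (t - tstar)^2]. *)

Lemma dot_le_sqrt_sum_sqr (R : rcfType) (a b C S : R) :
  C ^+ 2 + S ^+ 2 = 1 -> a * C + b * S <= Num.sqrt (a ^+ 2 + b ^+ 2).
Proof.
move=> unitCS.
have lagrange : (a ^+ 2 + b ^+ 2) * (C ^+ 2 + S ^+ 2) - (a * C + b * S) ^+ 2
                = (a * S - b * C) ^+ 2 by ring.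
rewrite unitCS mulr1 in lagrange.
have sqr_le : (a * C + b * S) ^+ 2 <= a ^+ 2 + b ^+ 2.
  by rewrite -subr_ge0 lagrange sqr_ge0.
by apply: le_trans (ler_norm _) _; rewrite -sqrtr_sqr ler_wsqrtr.
Qed.

Lemma alpha_ge_linearized (R : realType) (L mu c C S t : R) :
  mu <= L -> 0 <= t -> C ^+ 2 + S ^+ 2 = 1 ->
  1 - (L + mu) * t + 2^-1 * (L ^+ 2 + mu ^+ 2 + 2 * c ^+ 2) * t ^+ 2
   + (L - mu) * t * (((L + mu) * t - 2) * C + 2 * c * t * S) / 2
  <= alpha L mu c t.
Proof.
move=> mu_le_L t_ge0 unitCS.
have dot_le := @dot_le_sqrt_sum_sqr _ (L * t + mu * t - 2) (2 * c * t) _ _ unitCS.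
have sqr_ct : (2 * c * t) ^+ 2 = 4 * c ^+ 2 * t ^+ 2 by ring.
rewrite sqr_ct in dot_le.
have slope_ge0 : 0 <= (L - mu) * t by rewrite mulr_ge0 // subr_ge0.
have := ler_wpM2l slope_ge0 dot_le.
rewrite /alpha; lra.
Qed.

Section OptimalStep.
Variables (R : realType) (L mu c : R).
Hypotheses (mu_gt0 : 0 < mu) (mu_le_L : mu <= L) (c_ge0 : 0 <= c).

Let r := Num.sqrt (c ^+ 2 + L * mu).
Let E := 4 * c ^+ 2 + (L + mu) ^+ 2.
Let D := (L + mu) * r - c * (L - mu).
Let tmax := 2 * mu / (mu * L + c ^+ 2).
Let tstar := 2 * ((L + mu) * r + c * (mu - L)) / (E * r).

Let L_gt0 : 0 < L := lt_le_trans mu_gt0 mu_le_L.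
Let mu_ge0 : 0 <= mu := ltW mu_gt0.
Let L_ge0 : 0 <= L := ltW L_gt0.

Let r_gt0 : 0 < r.
Proof. by rewrite sqrtr_gt0 ltr_wpDl ?sqr_ge0 ?mulr_gt0. Qed.

Let r_ge0 : 0 <= r := ltW r_gt0.
Let r_neq0 : r != 0 := lt0r_neq0 r_gt0.

Let sqr_r : r ^+ 2 = c ^+ 2 + L * mu.
Proof. by rewrite sqr_sqrtr // addr_ge0 ?sqr_ge0 ?mulr_ge0. Qed.

Let E_gt0 : 0 < E.
Proof. by rewrite ltr_wpDl ?mulr_ge0 ?sqr_ge0 // exprn_gt0 ?addr_gt0. Qed.

Let E_ge0 : 0 <= E := ltW E_gt0.
Let E_neq0 : E != 0 := lt0r_neq0 E_gt0.

Let E_decomp : (L - mu) ^+ 2 + 4 * r ^+ 2 = E.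
Proof. by rewrite sqr_r /E; ring. Qed.

Let c_le_r : c <= r.
Proof.
by rewrite -(ger0_norm c_ge0) -sqrtr_sqr ler_wsqrtr // lerDl mulr_ge0.
Qed.

Let D_ge0 : 0 <= D.
Proof.
have -> : D = (L + mu) * (r - c) + 2 * mu * c by rewrite /D; ring.
by rewrite addr_ge0 ?mulr_ge0 ?subr_ge0 ?addr_ge0.
Qed.

Let tstarE : tstar = 2 * D / (E * r).
Proof. by rewrite /tstar /D; congr (_ / _); ring. Qed.

Lemma tstar_ge0 : 0 <= tstar.
Proof. by rewrite tstarE divr_ge0 ?mulr_ge0. Qed.

Lemma tstar_le_tmax : tstar <= tmax.
Proof.
have margin : mu * E - D * r
    = c * (L - mu) * (r - c) + 2 * mu * c ^+ 2 + mu ^+ 2 * (L + mu).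
  have -> : D * r = (L + mu) * r ^+ 2 - c * (L - mu) * r by rewrite /D; ring.
  by rewrite sqr_r /E; ring.
have gap : tmax - tstar = 2 * (mu * E - D * r) / (E * r ^+ 2).
  rewrite /tmax tstarE.
  have -> : mu * L + c ^+ 2 = r ^+ 2 by rewrite sqr_r; ring.
  by field; rewrite r_neq0 E_neq0.
rewrite -subr_ge0 gap margin divr_ge0 ?mulr_ge0 ?sqr_ge0 //.
by rewrite !addr_ge0 ?mulr_ge0 ?sqr_ge0 ?subr_ge0 ?addr_ge0.
Qed.

Let alpha_tstar : alpha L mu c tstar = 1 - 4 * D ^+ 2 / E ^+ 2.
Proof.
have radicand : (L * tstar + mu * tstar - 2) ^+ 2 + 4 * c ^+ 2 * tstar ^+ 2
                = (2 * c / r) ^+ 2.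
  have -> : (L * tstar + mu * tstar - 2) ^+ 2 + 4 * c ^+ 2 * tstar ^+ 2
             = 4 * c ^+ 2 * ((L - mu) ^+ 2 + 4 * r ^+ 2) / (E * r ^+ 2).
    by rewrite tstarE /D /E; field; rewrite -/E r_neq0 E_neq0.
  by rewrite E_decomp; field; rewrite r_neq0 E_neq0.
rewrite /alpha radicand sqrtr_sqr ger0_norm ?divr_ge0 ?mulr_ge0 //.
apply/subr0_eq.
transitivity (D ^+ 2 * ((L - mu) ^+ 2 + 4 * r ^+ 2 - E) / (E ^+ 2 * r ^+ 2)).
  by rewrite tstarE /D /E; field; rewrite -/E r_neq0 E_neq0.
by rewrite E_decomp subrr mulr0 mul0r.
Qed.

Lemma alpha_ge_tstar_add_sqr t :
  0 <= t -> alpha L mu c tstar + r ^+ 2 * (t - tstar) ^+ 2 <= alpha L mu c t.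
Proof.
move=> t_ge0.
(* the unit vector along [((L + mu) tstar - 2, 2 c tstar)] *)
pose C := - ((L + mu) * (L - mu) + 4 * r * c) / E.
pose S := 2 * D / E.
have unitCS : C ^+ 2 + S ^+ 2 = 1.
  have lagrange : ((L + mu) * (L - mu) + 4 * r * c) ^+ 2 + 4 * D ^+ 2
                  = E * ((L - mu) ^+ 2 + 4 * r ^+ 2) by rewrite /D /E; ring.
  have -> : C ^+ 2 + S ^+ 2
            = (((L + mu) * (L - mu) + 4 * r * c) ^+ 2 + 4 * D ^+ 2) / E ^+ 2.
    by rewrite /C /S; field.
  by rewrite lagrange E_decomp; field.
have := @alpha_ge_linearized _ L mu c C S t mu_le_L t_ge0 unitCS.
congr (_ <= _); rewrite alpha_tstar.
transitivity (r ^+ 2 * (t - tstar) ^+ 2 + (1 - 4 * D ^+ 2 / E ^+ 2)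
              + (E - ((L - mu) ^+ 2 + 4 * r ^+ 2)) * (t ^+ 2 / 4 - (L + mu) * t / E)).
  by rewrite tstarE /C /S /D /E; field; rewrite -/E r_neq0 E_neq0.
by rewrite E_decomp subrr mul0r addr0 addrC.
Qed.

Lemma alpha_tstar_lt t :
  0 <= t -> t != tstar -> alpha L mu c tstar < alpha L mu c t.
Proof.
move=> t_ge0 t_neq; apply: (lt_le_trans _ (alpha_ge_tstar_add_sqr t t_ge0)).
by rewrite ltrDl (pmulr_rgt0 _ (exprn_gt0 _ r_gt0)) lt_def sqrf_eq0 subr_eq0 t_neq sqr_ge0.
Qed.

Lemma alpha_tstar_closed_form :
  alpha L mu c tstar =
    (8 * c * (L ^+ 2 - mu ^+ 2) * Num.sqrt (L * mu + c ^+ 2)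
     + (L ^+ 2 - mu ^+ 2) ^+ 2 + 16 * c ^+ 2 * (L * mu + c ^+ 2))
    / ((L + mu) ^+ 2 + 4 * c ^+ 2) ^+ 2.
Proof.
rewrite alpha_tstar [L * mu + _]addrC -/r -sqr_r.
apply/esym/subr0_eq.
transitivity (((L - mu) ^+ 2 + 4 * r ^+ 2 - E) / E).
  by rewrite /D /E; field; rewrite -/E E_neq0.
by rewrite E_decomp subrr mul0r.
Qed.

End OptimalStep.

Theorem proposition2p3 (R : realType) (n m : nat) (Lx Ly Lxy mux muy : R)
  (F : 'rV[R]_n * 'rV[R]_m -> R) :
  0 < Lx -> 0 < Ly -> 0 <= Lxy -> 0 < mux -> mux <= Lx -> 0 < muy -> muy <= Ly ->
  FClass Lx Ly Lxy mux muy F ->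
  let L := Num.max Lx Ly in
  let mu := Num.min mux muy in
  let tmax := 2 * mu / (mu * L + Lxy ^+ 2) in
  let tstar := 2 * ((L + mu) * Num.sqrt (Lxy ^+ 2 + L * mu) + Lxy * (mu - L))
               / ((4 * Lxy ^+ 2 + (L + mu) ^+ 2) * Num.sqrt (Lxy ^+ 2 + L * mu)) in
  [/\ 0 <= tstar <= tmax,
      (forall t, 0 <= t <= tmax -> t != tstar -> alpha L mu Lxy tstar < alpha L mu Lxy t)
    & alpha L mu Lxy tstar =
      (8 * Lxy * (L ^+ 2 - mu ^+ 2) * Num.sqrt (L * mu + Lxy ^+ 2)
       + (L ^+ 2 - mu ^+ 2) ^+ 2 + 16 * Lxy ^+ 2 * (L * mu + Lxy ^+ 2))
      / ((L + mu) ^+ 2 + 4 * Lxy ^+ 2) ^+ 2].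
Proof.
move=> _ _ Lxy_ge0 mux_gt0 mux_le_Lx muy_gt0 _ _ L mu tmax tstar.
have mu_gt0 : 0 < mu by rewrite lt_min mux_gt0 muy_gt0.
have mu_le_L : mu <= L by rewrite ge_min le_max mux_le_Lx.
split.
- by apply/andP; split; [exact: tstar_ge0 | exact: tstar_le_tmax].
- by move=> t /andP[t_ge0 _]; apply: alpha_tstar_lt.
- exact: alpha_tstar_closed_form.
Qed.
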